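(* Let $n$ be odd and let $\mathcal S\subseteq\mathbb Z_3^{2n}$ be an isotropic subspace of dimension $n-1$, with $A(z)=\sum_{\chi\in\mathcal S}z^{\mathrm{wt}(\chi)}$ and $B(z)=\sum_{\chi\in\mathcal S^\perp}z^{\mathrm{wt}(\chi)}$. Then $3A(-1/2)+B(-1/2)=0$. If moreover $B(-1/2)\neq0$ and $3A'(-1/2)+B'(-1/2)=0$, then also $3A''(-1/2)+B''(-1/2)=0$, and consequently the function $$\epsilon'(\epsilon)=\frac{3\big(3A(z(\epsilon))+B(z(\epsilon))\big)}{4B(z(\epsilon))},\qquad z(\epsilon)=\frac{3-\epsilon}{8\epsilon-6},$$ satisfies $\epsilon'(\epsilon)=O(\epsilon^3)$ as $\epsilon\to0$.
   Context: For $\chi=(\vec u|\vec v)\in\mathbb Z_3^{2n}$, $\mathrm{wt}(\chi)=\#\{i:(u_i,v_i)\neq(0,0)\}$. The symplectic form is $[\chi,\chi']=\vec u\cdot\vec v'-\vec u'\cdot\vec v$; $\mathcal S$ isotropic means $[\chi,\chi']=0$ for all $\chi,\chi'\in\mathcal S$; $\mathcal S^\perp=\{\chi\in\mathbb Z_3^{2n}:[\chi,\sigma]=0\ \forall\sigma\in\mathcal S\}$. Primes denote derivatives in $z$. (Note $z(0)=-1/2$.) *)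

From HB Require Import structures.
From mathcomp Require Import all_boot all_order all_algebra.
Set Implicit Arguments. Unset Strict Implicit. Unset Printing Implicit Defensive.
Import Order.TTheory GRing.Theory Num.Theory.
Local Open Scope ring_scope.

(* Z_3^{2n}: a vector chi = (u | v) is a row vector of length n + n over 'F_3;
   u = lsubmx chi, v = rsubmx chi. *)
Notation vec3 n := ('rV['F_3]_(n + n)) (only parsing).

Definition wt (n : nat) (chi : 'rV['F_3]_(n + n)) : nat :=
  #|[set i : 'I_n | (lsubmx chi 0 i != 0) || (rsubmx chi 0 i != 0)]|.

Definition symp (n : nat) (chi chi' : 'rV['F_3]_(n + n)) : 'F_3 :=
  \sum_(i < n) (lsubmx chi 0 i * rsubmx chi' 0 i)
  - \sum_(i < n) (lsubmx chi' 0 i * rsubmx chi 0 i).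

Definition isotropic (n : nat) (S : {vspace 'rV['F_3]_(n + n)}) : Prop :=
  forall x y, x \in S -> y \in S -> symp x y = 0.

Definition sperp (n : nat) (S : {vspace 'rV['F_3]_(n + n)}) : pred 'rV['F_3]_(n + n) :=
  [pred x | [forall s : 'rV['F_3]_(n + n), (s \in S) ==> (symp x s == 0)]].

Definition wenum (R : nzRingType) (n : nat) (P : pred 'rV['F_3]_(n + n)) : {poly R} :=
  \sum_(x : 'rV['F_3]_(n + n) | P x) 'X^(wt x).

Definition bigO_cube_at0 (R : realFieldType) (f : R -> R) : Prop :=
  exists C : R, exists2 d : R, 0 < d &
    forall e : R, `|e| < d -> `|f e| <= C * `|e| ^+ 3.

From HB Require Import structures.
From mathcomp Require Import all_boot all_order all_algebra finfield algC.
From mathcomp Require Import ring lra.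
Set Implicit Arguments. Unset Strict Implicit. Unset Printing Implicit Defensive.
Import Order.TTheory GRing.Theory Num.Theory.
Local Open Scope ring_scope.

(* By the MacWilliams identity over Z_3, proved with the character t |-> w^t
   for a primitive cube root of unity w, and |S| = 3^(n-1),
     3A(z) + B(z) = sum_(x in S) [3 z^wt(x) + 3^(1-n) (1 - z)^wt(x) (1 + 8z)^(n-wt(x))].
   At z = -1/2 we have 1 - z = 3/2 and 1 + 8z = -3, and for odd n each summand
   vanishes there; moreover the ratio of its second-order to its first-order
   Taylor coefficient at -1/2 is -4(n-1)/3, independently of the weight.
   Summing, 3A + B vanishes at -1/2, and if its first derivative vanishes there
   so does its second: -1/2 is a triple root. As z(eps) + 1/2 = O(eps) and
   B(-1/2) <> 0, the quotient eps'(eps) is O(eps^3). *)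

Lemma sum_F3 (V : nmodType) (F : 'F_3 -> V) :
  \sum_(t : 'F_3) F t = F 0 + F 1 + F 2%:R.
Proof.
rewrite (@big_ord_recr _ _ _ 2) /= big_ord_recr /= big_ord_recr /= big_ord0 add0r.
by congr (_ + _ + _); apply: congr1; apply: val_inj.
Qed.

Lemma F3_cases (t : 'F_3) : [\/ t = 0, t = 1 | t = 2%:R].
Proof.
case: t => [[|[|[|?]]] ?] //; [apply: Or31 | apply: Or32 | apply: Or33];
  exact: val_inj.
Qed.

Lemma prodr_if (R : comPzSemiRingType) (I : finType) (P : pred I) (a b : R) :
  \prod_i (if P i then a else b) = a ^+ #|P| * b ^+ #|[predC P]|.
Proof.
rewrite (bigID P) /= -!prodr_const.
by congr (_ * _); apply: eq_big => // i; [move=> -> | move/negbTE ->].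
Qed.

Section SymplecticForm.

Variable n : nat.
Implicit Types x y : 'rV['F_3]_(n + n).

Lemma symp_antisym x y : symp x y = - symp y x.
Proof. by rewrite /symp opprB. Qed.

Lemma sympDl x x' y : symp (x + x') y = symp x y + symp x' y.
Proof.
have lD i : lsubmx (x + x') 0 i = lsubmx x 0 i + lsubmx x' 0 i.
  by rewrite linearD mxE.
have rD i : rsubmx (x + x') 0 i = rsubmx x 0 i + rsubmx x' 0 i.
  by rewrite linearD mxE.
rewrite /symp; under eq_bigr do rewrite lD mulrDl.
under [X in _ - X]eq_bigr do rewrite rD mulrDr.
by rewrite !big_split /= opprD addrACA.
Qed.

Definition pairs_of_row y : {ffun 'I_n -> 'F_3 * 'F_3} :=
  [ffun i => (lsubmx y 0 i, rsubmx y 0 i)].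

Definition row_of_pairs (f : {ffun 'I_n -> 'F_3 * 'F_3}) : 'rV['F_3]_(n + n) :=
  row_mx (\row_i (f i).1) (\row_i (f i).2).

Lemma row_of_pairsK : cancel row_of_pairs pairs_of_row.
Proof.
move=> f; apply/ffunP => i.
by rewrite ffunE /row_of_pairs row_mxKl row_mxKr !mxE; case: (f i).
Qed.

Lemma pairs_of_rowK : cancel pairs_of_row row_of_pairs.
Proof.
move=> y; rewrite /row_of_pairs -[y in RHS]hsubmxK.
by congr row_mx; apply/rowP => i; rewrite !mxE ffunE /= mxE.
Qed.

Lemma wt_le y : (wt y <= n)%N.
Proof. by rewrite /wt (leq_trans (max_card _)) // card_ord. Qed.

End SymplecticForm.

Section CubeRootCharacter.

Variables (T : idomainType) (w : T).
Hypotheses (w_root : w ^+ 2 + w + 1 = 0) (three_neq0 : 3 != 0 :> T).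

Lemma w_cube : w ^+ 3 = 1.
Proof.
have -> : w ^+ 3 = (w - 1) * (w ^+ 2 + w + 1) + 1 by ring.
by rewrite w_root mulr0 add0r.
Qed.

Lemma w_neq1 : w != 1.
Proof.
apply: contraNneq three_neq0 => w1; apply/eqP.
by rewrite -w_root w1; ring.
Qed.

Definition char3 (t : 'F_3) : T := w ^+ t.

Lemma char3D a b : char3 (a + b) = char3 a * char3 b.
Proof.
rewrite /char3 -exprD [in RHS](divn_eq (a + b) 3) exprD mulnC exprM.
by rewrite w_cube expr1n mul1r.
Qed.

Lemma char30 : char3 0 = 1. Proof. exact: expr0. Qed.

Lemma char3_neq1 t : t != 0 -> char3 t != 1.
Proof.
case: (F3_cases t) => -> // _; rewrite /char3 /=.
  by rewrite expr1 w_neq1.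
apply: contraNneq w_neq1 => /(congr1 ( *%R w)).
by rewrite -exprS w_cube mulr1 => <-.
Qed.

Lemma sum_char3_eq0 (V : finZmodType) (P : pred V) (L : V -> 'F_3) v0 :
  {morph L : u v / u + v} -> (forall v, P (v + v0) = P v) -> L v0 != 0 ->
  \sum_(v | P v) char3 (L v) = 0.
Proof.
move=> LD Pshift Lv0; set s := \sum_(v | P v) _.
have s_fix : s = char3 (L v0) * s.
  rewrite {1}/s (reindex_inj (addIr v0)) /=.
  under eq_bigl do rewrite Pshift.
  by rewrite mulr_sumr; apply: eq_bigr => v _; rewrite LD char3D mulrC.
have : (1 - char3 (L v0)) * s = 0 by rewrite mulrBl mul1r -s_fix subrr.
by move/eqP; rewrite mulf_eq0 subr_eq0 eq_sym (negbTE (char3_neq1 Lv0)) => /eqP.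
Qed.

Lemma sum_char3_coord (xu xv : 'F_3) (z : T) :
  \sum_(a : 'F_3) \sum_(b : 'F_3)
     char3 (xu * b - a * xv) * (if (a != 0) || (b != 0) then z else 1)
  = if (xu != 0) || (xv != 0) then 1 - z else 1 + 8%:R * z.
Proof.
have w2 : w ^+ 2 = - w - 1 by rewrite -[w ^+ 2]subr0 -w_root; ring.
by case: (F3_cases xu) => ->; case: (F3_cases xv) => ->;
  rewrite !sum_F3 /char3 /= ?expr0 ?expr1 ?w2; ring.
Qed.

Variable n : nat.
Implicit Types x y : 'rV['F_3]_(n + n).

Lemma sum_char3_symp_wt x (z : T) :
  \sum_y char3 (symp x y) * z ^+ wt y
  = (1 - z) ^+ wt x * (1 + 8%:R * z) ^+ (n - wt x).
Proof.
pose F i (p : 'F_3 * 'F_3) := char3 (lsubmx x 0 i * p.2 - p.1 * rsubmx x 0 i)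
  * (if (p.1 != 0) || (p.2 != 0) then z else 1).
have factor y : char3 (symp x y) * z ^+ wt y = \prod_i F i (pairs_of_row y i).
  rewrite /F; under eq_bigr do rewrite ffunE /=.
  rewrite big_split /=; congr (_ * _).
    by rewrite /symp -sumrB (big_morph char3 char3D char30).
  by rewrite /wt -prodr_const big_mkcond; apply: eq_bigr => i _; rewrite inE.
rewrite (eq_bigr _ (fun y _ => factor y)) (reindex (@row_of_pairs n)); last first.
  by apply: onW_bij; exists (@pairs_of_row n);
    [exact: row_of_pairsK | exact: pairs_of_rowK].
under eq_bigr do rewrite row_of_pairsK.
rewrite -bigA_distr_bigA.
rewrite (eq_bigr _ (fun i _ => etrans (esym (pair_bigA _ (fun a b => F i (a, b))))
                                       (sum_char3_coord _ _ z))).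
rewrite prodr_if /wt cardsE; congr (_ * _ ^+ _).
set P := (fun i => _); apply: (@addnI #|P|).
by rewrite cardC card_ord subnKC // -[X in (_ <= X)%N](card_ord n) max_card.
Qed.

Lemma sum_char3_symp_vspace (S : {vspace 'rV['F_3]_(n + n)}) y :
  \sum_(x | x \in S) char3 (symp x y) = if sperp S y then (#|S|%:R : T) else 0.
Proof.
case: ifP => [/forallP y_perp | /negbT/forallPn[s]].
  rewrite -sumr_const; apply: eq_bigr => x xS.
  by move: (y_perp x); rewrite xS symp_antisym oppr_eq0 => /eqP->; rewrite char30.
rewrite negb_imply => /andP[sS ys].
apply: (@sum_char3_eq0 _ (mem S) (fun x => symp x y) s) => [x x'|x|]; first exact: sympDl.
  by rewrite /= rpredDr.
by rewrite symp_antisym oppr_eq0.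
Qed.

Lemma macwilliams_char (S : {vspace 'rV['F_3]_(n + n)}) (z : T) :
  #|S|%:R * \sum_(y | sperp S y) z ^+ wt y
  = \sum_(x | x \in S) (1 - z) ^+ wt x * (1 + 8%:R * z) ^+ (n - wt x).
Proof.
under [RHS]eq_bigr do rewrite -sum_char3_symp_wt.
rewrite exchange_big /= mulr_sumr [in LHS]big_mkcond /=.
apply: eq_bigr => y _; rewrite -mulr_suml sum_char3_symp_vspace.
by case: ifP; rewrite ?mul0r ?mulr0.
Qed.

End CubeRootCharacter.

Definition mw_poly (R : comNzRingType) n (S : {vspace 'rV['F_3]_(n + n)}) : {poly R} :=
  \sum_(x | x \in S) (1 - 'X) ^+ wt x * (1 + 8%:R * 'X) ^+ (n - wt x).

Lemma map_wenum (R : comNzRingType) n (P : pred 'rV['F_3]_(n + n)) :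
  map_poly intr (wenum int P) = wenum R P.
Proof.
by rewrite /wenum rmorph_sum; apply: eq_bigr => x _; rewrite rmorphXn /= map_polyX.
Qed.

Lemma map_mw_poly (R : comNzRingType) n (S : {vspace 'rV['F_3]_(n + n)}) :
  map_poly intr (mw_poly int S) = mw_poly R S.
Proof.
rewrite /mw_poly rmorph_sum; apply: eq_bigr => x _.
by rewrite rmorphM !rmorphXn rmorphB rmorphD rmorphM rmorph1 rmorph_nat /= map_polyX.
Qed.

Definition omega : algC := (-1 + sqrtC (-3)) / 2.

Lemma omega_root : omega ^+ 2 + omega + 1 = 0.
Proof.
rewrite /omega; set s := sqrtC _.
have -> : ((-1 + s) / 2) ^+ 2 + (-1 + s) / 2 + 1 = (s ^+ 2 + 3) / 4 :> algC by field.
by rewrite /s sqrtCK addrC subrr mul0r.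
Qed.

Lemma macwilliams_algC n (S : {vspace 'rV['F_3]_(n + n)}) :
  #|S|%:R * wenum algC (sperp S) = mw_poly algC S.
Proof.
apply: (@macwilliams_char _ omega%:P).
  by rewrite -polyC_exp -polyCD -polyC1 -polyCD omega_root.
by rewrite -(rmorph_nat (@polyC algC)) polyC_eq0 pnatr_eq0.
Qed.

(* Both sides have integer coefficients, so the identity passes from algC, which
   has a primitive cube root of unity, to int and thence to every commutative ring. *)
Lemma macwilliams (R : comNzRingType) n (S : {vspace 'rV['F_3]_(n + n)}) :
  #|S|%:R * wenum R (sperp S) = mw_poly R S.
Proof.
have macwilliams_int : #|S|%:R * wenum int (sperp S) = mw_poly int S.
  apply/polyP => i; apply: (@intr_inj algC).
  rewrite -!(coef_map intr) map_mw_poly rmorphM rmorph_nat /= map_wenum.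
  by rewrite macwilliams_algC.
by rewrite -map_wenum -map_mw_poly -macwilliams_int rmorphM rmorph_nat.
Qed.

Section SecondOrderJets.

Variables (R : comNzRingType) (t : {poly R}).

Definition jet2 (p : {poly R}) (a b c : R) :=
  exists r, p = a%:P + b *: t + c *: t ^+ 2 + t ^+ 3 * r.

Lemma jet2_eq p a b c a' b' c' :
  jet2 p a b c -> a = a' -> b = b' -> c = c' -> jet2 p a' b' c'.
Proof. by move=> + <- <- <-. Qed.

Lemma jet2D p q a b c a' b' c' : jet2 p a b c -> jet2 q a' b' c' ->
  jet2 (p + q) (a + a') (b + b') (c + c').
Proof. by move=> [r ->] [r' ->]; exists (r + r'); rewrite -!mul_polyC !polyCD; ring. Qed.

Lemma jet2Z k p a b c : jet2 p a b c -> jet2 (k *: p) (k * a) (k * b) (k * c).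
Proof. by move=> [r ->]; exists (k *: r); rewrite -!mul_polyC !polyCM; ring. Qed.

Lemma jet2N p a b c : jet2 p a b c -> jet2 (- p) (- a) (- b) (- c).
Proof. by move=> /(jet2Z (-1)); rewrite scaleN1r !mulN1r. Qed.

Lemma jet2M p q a b c a' b' c' : jet2 p a b c -> jet2 q a' b' c' ->
  jet2 (p * q) (a * a') (a * b' + b * a') (a * c' + b * b' + c * a').
Proof.
move=> [r ->] [r' ->].
exists ((b * c' + c * b')%:P + (c * c')%:P * t
        + r * (a'%:P + b'%:P * t + c'%:P * t ^+ 2 + t ^+ 3 * r')
        + (a%:P + b%:P * t + c%:P * t ^+ 2) * r').
by rewrite -!mul_polyC !polyCD !polyCM; ring.
Qed.

Lemma jet2_sum (I : finType) (P : pred I) (F : I -> {poly R}) (a b c : I -> R) :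
  (forall i, P i -> jet2 (F i) (a i) (b i) (c i)) ->
  jet2 (\sum_(i | P i) F i) (\sum_(i | P i) a i) (\sum_(i | P i) b i)
       (\sum_(i | P i) c i).
Proof.
move=> jetF; elim: (index_enum I) => [|i s IHs].
  by rewrite !big_nil; exists 0; rewrite polyC0 !scale0r mulr0 !addr0.
by rewrite !big_cons; case: ifP => // Pi; apply: jet2D (jetF i Pi) IHs.
Qed.

Lemma jet2_affineX (be : R) k :
  jet2 ((1 + be *: t) ^+ k) 1 (k%:R * be) ('C(k, 2)%:R * be ^+ 2).
Proof.
elim: k => [|k IHk].
  by exists 0; rewrite expr0 polyC1 mul0r bin0n mul0r !scale0r mulr0 !addr0.
have jet_lin : jet2 (1 + be *: t) 1 be 0.
  by exists 0; rewrite polyC1 scale0r mulr0 !addr0.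
rewrite exprS; apply: jet2_eq (jet2M jet_lin IHk) _ _ _; rewrite ?mulr1 //.
  by rewrite mulrSr; ring.
by rewrite binS bin1 natrD; ring.
Qed.

End SecondOrderJets.

Lemma jet2_derivn (R : comNzRingType) (h : R) p a b c : jet2 ('X - h%:P) p a b c ->
  [/\ p.[h] = a, (p^`()).[h] = b & (p^`(2)).[h] = c *+ 2].
Proof.
move=> [r ->]; set t := 'X - h%:P.
have dt : t^`() = 1 by rewrite derivXsubC.
have th : t.[h] = 0 by rewrite hornerXsubC subrr.
rewrite derivnS derivn1.
rewrite !(derivD, derivZ, derivC, derivM, deriv_exp, dt, derivMn, derivN, derivX).
by rewrite !(hornerE, th) /=; split; ring.
Qed.

Section MacWilliamsTerm.

Variables (R : numFieldType) (n : nat).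
Hypothesis n_odd : odd n.

Local Notation h := (- (1 / 2) : R).
Local Notation t := ('X - h%:P).

(* The summand of weight w of 3A + B, by the MacWilliams identity and |S| = 3^(n-1). *)
Definition mw_term (w : nat) : {poly R} :=
  'X ^+ w *+ 3 + (3 ^+ n.-1)^-1 *: ((1 - 'X) ^+ w * (1 + 8%:R * 'X) ^+ (n - w)).

Definition mw_slope (w : nat) : R := 4 * h ^+ w * (2 * n%:R - 3 * w%:R).

Definition mw_curvature : R := - (4 * (n%:R - 1) / 3).

Lemma mw_scale w : (w <= n)%N ->
  (3 ^+ n.-1)^-1 * ((3 / 2) ^+ w * (-3) ^+ (n - w)) = - (3 * h ^+ w) :> R.
Proof.
move=> le_wn; have n_gt0 : (0 < n)%N by case: n n_odd.
have sign : (-1) ^+ (n - w) = - (-1) ^+ w :> R.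
  by rewrite -signr_odd oddB // n_odd signr_addb /= expr1 signr_odd mulN1r.
have pow3 : 3 ^+ w * 3 ^+ (n - w) = 3 * 3 ^+ n.-1 :> R.
  by rewrite -exprD subnKC // -exprS prednK.
rewrite -[-3]mulN1r -[h]mulN1r !exprMn sign.
have -> : (3 ^+ n.-1)^-1 * (3 ^+ w * 2^-1 ^+ w * (- (-1) ^+ w * 3 ^+ (n - w)))
    = - ((3 ^+ n.-1)^-1 * (3 ^+ w * 3 ^+ (n - w))) * ((-1) ^+ w * 2^-1 ^+ w) :> R.
  by ring.
rewrite pow3 expr1n mul1r; field.
by rewrite expf_neq0 ?pnatr_eq0.
Qed.

Lemma scale_affine (a b : R) : a *: (1 + b *: t) = (a - a * b * h)%:P + (a * b) *: 'X.
Proof. by rewrite -!mul_polyC polyCB !polyCM; ring. Qed.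

Lemma X_affine : 'X = h *: (1 + (-2) *: t).
Proof.
rewrite scale_affine (_ : h * -2 = 1) ?mul1r ?subrr ?polyC0 ?add0r ?scale1r //.
by field.
Qed.

Lemma oneBX_affine : 1 - 'X = (3 / 2) *: (1 + (-2 / 3) *: t).
Proof.
rewrite scale_affine (_ : 3 / 2 * (-2 / 3) = -1) ?scaleN1r; last by field.
by rewrite (_ : 3 / 2 - -1 * h = 1) ?polyC1 //; field.
Qed.

Lemma oneD8X_affine : 1 + 8%:R * 'X = (-3) *: (1 + (-8 / 3) *: t).
Proof.
rewrite scale_affine (_ : -3 * (-8 / 3) = 8%:R) ?scaler_nat ?mulr_natl; last by field.
by rewrite (_ : -3 - h *+ 8 = 1) ?polyC1 // -mulr_natl; field.
Qed.

Lemma mw_term_affine w : (w <= n)%N ->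
  mw_term w = (3 * h ^+ w) *: ((1 + (-2) *: t) ^+ w
    - (1 + (-2 / 3) *: t) ^+ w * (1 + (-8 / 3) *: t) ^+ (n - w)).
Proof.
move=> le_wn; rewrite /mw_term {1}X_affine oneBX_affine oneD8X_affine !exprZn.
set P := (1 + _ *: t) ^+ w; set Q := (1 + _ *: t) ^+ w.
set Q' := (1 + _ *: t) ^+ (n - w).
rewrite scalerBr -scaleNr -mw_scale // -scalerAl -scalerAr !scalerA -mulrA.
by rewrite -scaler_nat scalerA.
Qed.

Lemma natr_bin2 k : 'C(k, 2)%:R = k%:R * (k%:R - 1) / 2 :> R.
Proof.
elim: k => [|k IHk]; first by rewrite bin0n !mul0r.
by rewrite binS bin1 natrD IHk -addn1 natrD; field.
Qed.

Lemma jet2_mw_term w : (w <= n)%N ->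
  jet2 t (mw_term w) 0 (mw_slope w) (mw_curvature * mw_slope w).
Proof.
move=> le_wn; rewrite mw_term_affine //.
apply: jet2_eq (jet2Z _ (jet2D (jet2_affineX t (-2) w) (jet2N (jet2M
  (jet2_affineX t (-2 / 3) w) (jet2_affineX t (-8 / 3) (n - w)))))) _ _ _.
- by rewrite mulr1 subrr mulr0.
- by rewrite /mw_slope natrB //; field.
- by rewrite /mw_slope /mw_curvature !natr_bin2 natrB //; field.
Qed.

End MacWilliamsTerm.

Section LocalBounds.

Variables (R : realFieldType) (h : R).

Lemma poly_bounded_near (p : {poly R}) :
  exists2 M, 0 <= M & forall z, `|z - h| <= 1 -> `|p.[z]| <= M.
Proof.
elim/poly_ind: p => [|p c [M M_ge0 boundM]].
  by exists 0 => // z _; rewrite horner0 normr0.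
exists (M * (`|h| + 1) + `|c|) => [|z near_z].
  by rewrite addr_ge0 // mulr_ge0 // addr_ge0.
have bound_z : `|z| <= `|h| + 1.
  by have := ler_normD (z - h) h; rewrite subrK; lra.
rewrite hornerMXaddC (le_trans (ler_normD _ _)) // normrM lerD2r.
by rewrite ler_pM ?boundM.
Qed.

Lemma poly_bounded_below_near (p : {poly R}) : p.[h] != 0 ->
  exists2 d, 0 < d & forall z, `|z - h| < d -> `|p.[h]| <= 2 * `|p.[z]|.
Proof.
move=> ph_neq0; set b := `|p.[h]|; have b_gt0 : 0 < b by rewrite normr_gt0.
have /factor_theorem[q pE] : root (p - (p.[h])%:P) h.
  by rewrite /root hornerD hornerN hornerC subrr.
have [M M_ge0 boundM] := poly_bounded_near q.
exists (Num.min 1 (b / (2 * (M + 1)))) => [|z].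
  by rewrite lt_min ltr01 divr_gt0 //; lra.
rewrite lt_min => /andP[near_z small_z].
have pz : p.[z] = p.[h] + q.[z] * (z - h).
  by have := congr1 (horner^~ z) pE; rewrite !hornerE /= => <-; ring.
have qz : `|q.[z] * (z - h)| <= M * `|z - h|.
  by rewrite normrM ler_wpM2r // boundM // ltW.
have {}small_z : `|z - h| * (2 * (M + 1)) < b by rewrite -ltr_pdivlMr //; lra.
have := lerB_normD p.[h] (q.[z] * (z - h)); rewrite -pz -/b; nra.
Qed.

End LocalBounds.

Definition z_of_eps (R : fieldType) (e : R) := (3 - e) / (8 * e - 6).

Lemma z_of_eps_near (R : realFieldType) (e : R) : `|e| < 1 / 8 ->
  `|z_of_eps e - - (1 / 2)| <= `|e|.
Proof.
move=> small_e; have /andP[e_gt e_lt] : - (1 / 8) < e < 1 / 8 by rewrite -ltr_norml.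
have den_neq0 : 8 * e - 6 != 0 by apply/eqP; lra.
have -> : z_of_eps e - - (1 / 2) = e * (3 / (8 * e - 6)) by rewrite /z_of_eps; field.
rewrite normrM ler_piMr // normrM normfV ler_pdivrMr ?normr_gt0 //.
by rewrite mul1r ger0_norm ?ltr0n // ler0_norm; lra.
Qed.

Section BigOCube.

Variable R : realFieldType.
Implicit Types f g : R -> R.

Lemma bigO_cube_ext f g : f =1 g -> bigO_cube_at0 g -> bigO_cube_at0 f.
Proof.
by move=> fg [C [d d_gt0 bound]]; exists C, d => // e; rewrite fg; apply: bound.
Qed.

Lemma bigO_cubeZ k f : bigO_cube_at0 f -> bigO_cube_at0 (fun e => k * f e).
Proof.
move=> [C [d d_gt0 bound]]; exists (`|k| * C), d => // e small_e.
by rewrite normrM -mulrA ler_wpM2l ?bound.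
Qed.

Lemma bigO_cube_triple_root (G B r : {poly R}) :
  G = ('X - (- (1 / 2))%:P) ^+ 3 * r -> B.[- (1 / 2)] != 0 ->
  bigO_cube_at0 (fun e => G.[z_of_eps e] / B.[z_of_eps e]).
Proof.
set h : R := - (1 / 2) => GE Bh_neq0; set b := `|B.[h]|.
have b_gt0 : 0 < b by rewrite normr_gt0.
have [M M_ge0 boundM] := poly_bounded_near h r.
have [d d_gt0 B_away] := poly_bounded_below_near Bh_neq0.
exists (2 * M / b), (Num.min (1 / 8) d) => [|e]; first by rewrite lt_min d_gt0; lra.
rewrite lt_min => /andP[small_e e_lt_d]; set z := z_of_eps e.
have z_near : `|z - h| <= `|e| := z_of_eps_near small_e.
have Bz : b <= 2 * `|B.[z]| by rewrite B_away // (le_lt_trans z_near).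
have Gz : `|G.[z]| <= `|e| ^+ 3 * M.
  rewrite GE hornerM horner_exp hornerXsubC normrM normrX.
  by rewrite ler_pM ?exprn_ge0 ?lerXn2r ?nnegrE ?boundM //; lra.
have Bz_gt0 : 0 < `|B.[z]| by lra.
rewrite normrM normfV ler_pdivrMr //.
apply: (le_trans Gz).
have -> : 2 * M / b * `|e| ^+ 3 * `|B.[z]| = `|e| ^+ 3 * M * (2 * `|B.[z]| / b) by ring.
by rewrite ler_peMr ?mulr_ge0 ?exprn_ge0 // ler_pdivlMr // mul1r.
Qed.

End BigOCube.

Lemma jet2_wenum (R : numFieldType) n (S : {vspace 'rV['F_3]_(n + n)}) :
  odd n -> \dim S = n.-1 ->
  let L := \sum_(x | x \in S) mw_slope R n (wt x) in
  jet2 ('X - (- (1 / 2))%:P) (wenum R (mem S) *+ 3 + wenum R (sperp S))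
       0 L (mw_curvature R n * L).
Proof.
move=> n_odd dimS L.
have cardS : #|S|%:R = 3 ^+ n.-1 :> R by rewrite card_vspace card_Fp // dimS natrX.
have BE : wenum R (sperp S) = (3 ^+ n.-1)^-1 *: mw_poly R S.
  rewrite -macwilliams mulr_natl -scaler_nat scalerA cardS mulVf ?scale1r //.
  by rewrite expf_neq0 ?pnatr_eq0.
have -> : wenum R (mem S) *+ 3 + wenum R (sperp S)
    = \sum_(x | x \in S) mw_term R n (wt x).
  by rewrite BE scaler_sumr /wenum -sumrMnl -big_split.
rewrite /L mulr_sumr.
apply: jet2_eq (jet2_sum (fun x _ => jet2_mw_term R n_odd (wt_le x))) _ _ _ => //.
by rewrite big1.
Qed.

Theorem mainTheorem6 (R : realFieldType) (n : nat)
  (S : {vspace 'rV['F_3]_(n + n)}) :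
  odd n -> isotropic S -> \dim S = n.-1 ->
  let A : {poly R} := wenum R (fun x => x \in S) in
  let B : {poly R} := wenum R (sperp S) in
  let h : R := - (1 / 2) in
  3 * A.[h] + B.[h] = 0 /\
  (B.[h] != 0 -> 3 * (A^`()).[h] + (B^`()).[h] = 0 ->
     3 * (A^`(2)).[h] + (B^`(2)).[h] = 0 /\
     bigO_cube_at0 (fun eps : R =>
       let z := (3 - eps) / (8 * eps - 6) in
       3 * (3 * A.[z] + B.[z]) / (4 * B.[z]))).
Proof.
move=> n_odd _ dimS A B h.
have jetG := jet2_wenum R n_odd dimS; set L := \sum_(x | _) _ in jetG.
have [G_h G'_h G''_h] := jet2_derivn jetG.
have G_eval z : (A *+ 3 + B).[z] = 3 * A.[z] + B.[z].
  by rewrite hornerD hornerMn -mulr_natl.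
split=> [|Bh_neq0 slope0]; first by rewrite -G_eval G_h.
have L0 : L = 0 by rewrite -G'_h derivD derivMn hornerD hornerMn -mulr_natl.
split.
  by move: G''_h; rewrite derivnD derivnMn hornerD hornerMn -mulr_natl L0 mulr0 mul0rn.
have [r G_root3] := jetG; rewrite L0 mulr0 polyC0 !scale0r !add0r in G_root3.
apply: bigO_cube_ext (bigO_cubeZ (3 / 4) (bigO_cube_triple_root G_root3 Bh_neq0)).
by move=> e; rewrite /z_of_eps G_eval invfM mulrACA.
Qed.
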